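(* Let $U_0, c_0, \rho_0 > 0$ and $\omega_f \in \mathbb{R}$ be constants and let $h$ be the Heaviside function. Let $f_1,\dots,f_4:\mathbb{R}\to\mathbb{R}$ be continuously differentiable, and $k_i,l_i,m_i$ ($i=1,\dots,4$) real numbers with $k_3k_4\neq 0$. Write $r_i = \sqrt{k_i^2+l_i^2+m_i^2}$, $\xi_i = k_ix+l_iy+m_iz$, and for $0\le\tau\le t$ set $a_1 = f_1[\xi_1 - (k_1U_0 - c_0r_1)(t-\tau)]$, $a_2 = f_2[\xi_2 - (k_2U_0+c_0r_2)(t-\tau)]$, $a_3 = f_3[\xi_3 - k_3U_0(t-\tau)]$, $a_4 = f_4[\xi_4 - k_4U_0(t-\tau)]$. Define $$v_x' = h(t)\int_0^t\Big(k_1 a_1 + k_2 a_2 + \tfrac{l_3}{k_3}a_3 + \tfrac{m_4}{k_4}a_4\Big)\sin\omega_f\tau\,d\tau,\quad v_y' = h(t)\int_0^t (l_1a_1 + l_2a_2 - a_3)\sin\omega_f\tau\,d\tau,$$ $$v_z' = h(t)\int_0^t (m_1a_1+m_2a_2-a_4)\sin\omega_f\tau\,d\tau,\quad p' = h(t)\int_0^t(-c_0\rho_0r_1a_1 + c_0\rho_0 r_2 a_2)\sin\omega_f\tau\,d\tau.$$ Then $(v_x',v_y',v_z',p')$ satisfies pointwise the system $$\partial_t v_x' + U_0\partial_x v_x' + \tfrac1{\rho_0}\partial_x p' = h(t)F\sin\omega_f t,\quad \partial_t v_y' + U_0\partial_x v_y' + \tfrac1{\rho_0}\partial_y p' = h(t)G\sin\omega_f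 t,$$ $$\partial_t v_z' + U_0\partial_x v_z' + \tfrac1{\rho_0}\partial_z p' = h(t)H\sin\omega_f t,\quad \partial_t p' + U_0\partial_x p' + \rho_0c_0^2(\partial_xv_x'+\partial_yv_y'+\partial_zv_z') = h(t)P\sin\omega_f t,$$ where $F = k_1f_1(\xi_1)+k_2f_2(\xi_2)+\frac{l_3}{k_3}f_3(\xi_3)+\frac{m_4}{k_4}f_4(\xi_4)$, $G = l_1f_1(\xi_1)+l_2f_2(\xi_2)-f_3(\xi_3)$, $H = m_1f_1(\xi_1)+m_2f_2(\xi_2)-f_4(\xi_4)$, $P = -c_0\rho_0r_1f_1(\xi_1)+c_0\rho_0r_2f_2(\xi_2)$.
   Context: This is the linearized 3D Euler system at a uniform flow $(U_0,0,0)$ forced by a permanent time-harmonic source with amplitude $(F,G,H,P)$ switched on at $t=0$. *)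

From Stdlib Require Import Reals.
From Coquelicot Require Import Coquelicot.
Open Scope R_scope.

Definition heaviside (t : R) : R := if Rle_dec 0 t then 1 else 0.

Definition cont_diff (f : R -> R) : Prop :=
  forall x, ex_derive f x /\ continuous (Derive f) x.


Definition r1 (U0 c0 rho0 wf : R) (f1 f2 f3 f4 : R -> R) (k1 l1 m1 k2 l2 m2 k3 l3 m3 k4 l4 m4 : R) := sqrt (k1^2 + l1^2 + m1^2).
Definition r2 (U0 c0 rho0 wf : R) (f1 f2 f3 f4 : R -> R) (k1 l1 m1 k2 l2 m2 k3 l3 m3 k4 l4 m4 : R) := sqrt (k2^2 + l2^2 + m2^2).

Definition xi1 (U0 c0 rho0 wf : R) (f1 f2 f3 f4 : R -> R) (k1 l1 m1 k2 l2 m2 k3 l3 m3 k4 l4 m4 : R) (x y z : R) := k1 * x + l1 * y + m1 * z.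
Definition xi2 (U0 c0 rho0 wf : R) (f1 f2 f3 f4 : R -> R) (k1 l1 m1 k2 l2 m2 k3 l3 m3 k4 l4 m4 : R) (x y z : R) := k2 * x + l2 * y + m2 * z.
Definition xi3 (U0 c0 rho0 wf : R) (f1 f2 f3 f4 : R -> R) (k1 l1 m1 k2 l2 m2 k3 l3 m3 k4 l4 m4 : R) (x y z : R) := k3 * x + l3 * y + m3 * z.
Definition xi4 (U0 c0 rho0 wf : R) (f1 f2 f3 f4 : R -> R) (k1 l1 m1 k2 l2 m2 k3 l3 m3 k4 l4 m4 : R) (x y z : R) := k4 * x + l4 * y + m4 * z.

Definition a1 (U0 c0 rho0 wf : R) (f1 f2 f3 f4 : R -> R) (k1 l1 m1 k2 l2 m2 k3 l3 m3 k4 l4 m4 : R) (t x y z tau : R) := f1 ((xi1 U0 c0 rho0 wf f1 f2 f3 f4 k1 l1 m1 k2 l2 m2 k3 l3 m3 k4 l4 m4) x y z - (k1 * U0 - c0 * (r1 U0 c0 rho0 wf f1 f2 f3 f4 k1 l1 m1 k2 l2 m2 k3 l3 m3 k4 l4 m4)) * (t - tau)).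
Definition a2 (U0 c0 rho0 wf : R) (f1 f2 f3 f4 : R -> R) (k1 l1 m1 k2 l2 m2 k3 l3 m3 k4 l4 m4 : R) (t x y z tau : R) := f2 ((xi2 U0 c0 rho0 wf f1 f2 f3 f4 k1 l1 m1 k2 l2 m2 k3 l3 m3 k4 l4 m4) x y z - (k2 * U0 + c0 * (r2 U0 c0 rho0 wf f1 f2 f3 f4 k1 l1 m1 k2 l2 m2 k3 l3 m3 k4 l4 m4)) * (t - tau)).
Definition a3 (U0 c0 rho0 wf : R) (f1 f2 f3 f4 : R -> R) (k1 l1 m1 k2 l2 m2 k3 l3 m3 k4 l4 m4 : R) (t x y z tau : R) := f3 ((xi3 U0 c0 rho0 wf f1 f2 f3 f4 k1 l1 m1 k2 l2 m2 k3 l3 m3 k4 l4 m4) x y z - k3 * U0 * (t - tau)).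
Definition a4 (U0 c0 rho0 wf : R) (f1 f2 f3 f4 : R -> R) (k1 l1 m1 k2 l2 m2 k3 l3 m3 k4 l4 m4 : R) (t x y z tau : R) := f4 ((xi4 U0 c0 rho0 wf f1 f2 f3 f4 k1 l1 m1 k2 l2 m2 k3 l3 m3 k4 l4 m4) x y z - k4 * U0 * (t - tau)).

Definition vx (U0 c0 rho0 wf : R) (f1 f2 f3 f4 : R -> R) (k1 l1 m1 k2 l2 m2 k3 l3 m3 k4 l4 m4 : R) (t x y z : R) : R :=
  heaviside t * RInt (fun tau =>
    (k1 * (a1 U0 c0 rho0 wf f1 f2 f3 f4 k1 l1 m1 k2 l2 m2 k3 l3 m3 k4 l4 m4) t x y z tau + k2 * (a2 U0 c0 rho0 wf f1 f2 f3 f4 k1 l1 m1 k2 l2 m2 k3 l3 m3 k4 l4 m4) t x y z tau + l3 / k3 * (a3 U0 c0 rho0 wf f1 f2 f3 f4 k1 l1 m1 k2 l2 m2 k3 l3 m3 k4 l4 m4) t x y z tau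
     + m4 / k4 * (a4 U0 c0 rho0 wf f1 f2 f3 f4 k1 l1 m1 k2 l2 m2 k3 l3 m3 k4 l4 m4) t x y z tau) * sin (wf * tau)) 0 t.
Definition vy (U0 c0 rho0 wf : R) (f1 f2 f3 f4 : R -> R) (k1 l1 m1 k2 l2 m2 k3 l3 m3 k4 l4 m4 : R) (t x y z : R) : R :=
  heaviside t * RInt (fun tau =>
    (l1 * (a1 U0 c0 rho0 wf f1 f2 f3 f4 k1 l1 m1 k2 l2 m2 k3 l3 m3 k4 l4 m4) t x y z tau + l2 * (a2 U0 c0 rho0 wf f1 f2 f3 f4 k1 l1 m1 k2 l2 m2 k3 l3 m3 k4 l4 m4) t x y z tau - (a3 U0 c0 rho0 wf f1 f2 f3 f4 k1 l1 m1 k2 l2 m2 k3 l3 m3 k4 l4 m4) t x y z tau) * sin (wf * tau)) 0 t.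
Definition vz (U0 c0 rho0 wf : R) (f1 f2 f3 f4 : R -> R) (k1 l1 m1 k2 l2 m2 k3 l3 m3 k4 l4 m4 : R) (t x y z : R) : R :=
  heaviside t * RInt (fun tau =>
    (m1 * (a1 U0 c0 rho0 wf f1 f2 f3 f4 k1 l1 m1 k2 l2 m2 k3 l3 m3 k4 l4 m4) t x y z tau + m2 * (a2 U0 c0 rho0 wf f1 f2 f3 f4 k1 l1 m1 k2 l2 m2 k3 l3 m3 k4 l4 m4) t x y z tau - (a4 U0 c0 rho0 wf f1 f2 f3 f4 k1 l1 m1 k2 l2 m2 k3 l3 m3 k4 l4 m4) t x y z tau) * sin (wf * tau)) 0 t.
Definition pp (U0 c0 rho0 wf : R) (f1 f2 f3 f4 : R -> R) (k1 l1 m1 k2 l2 m2 k3 l3 m3 k4 l4 m4 : R) (t x y z : R) : R :=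
  heaviside t * RInt (fun tau =>
    (- c0 * rho0 * (r1 U0 c0 rho0 wf f1 f2 f3 f4 k1 l1 m1 k2 l2 m2 k3 l3 m3 k4 l4 m4) * (a1 U0 c0 rho0 wf f1 f2 f3 f4 k1 l1 m1 k2 l2 m2 k3 l3 m3 k4 l4 m4) t x y z tau + c0 * rho0 * (r2 U0 c0 rho0 wf f1 f2 f3 f4 k1 l1 m1 k2 l2 m2 k3 l3 m3 k4 l4 m4) * (a2 U0 c0 rho0 wf f1 f2 f3 f4 k1 l1 m1 k2 l2 m2 k3 l3 m3 k4 l4 m4) t x y z tau)
    * sin (wf * tau)) 0 t.

Definition Fs (U0 c0 rho0 wf : R) (f1 f2 f3 f4 : R -> R) (k1 l1 m1 k2 l2 m2 k3 l3 m3 k4 l4 m4 : R) (x y z : R) := k1 * f1 ((xi1 U0 c0 rho0 wf f1 f2 f3 f4 k1 l1 m1 k2 l2 m2 k3 l3 m3 k4 l4 m4) x y z) + k2 * f2 ((xi2 U0 c0 rho0 wf f1 f2 f3 f4 k1 l1 m1 k2 l2 m2 k3 l3 m3 k4 l4 m4) x y z)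
  + l3 / k3 * f3 ((xi3 U0 c0 rho0 wf f1 f2 f3 f4 k1 l1 m1 k2 l2 m2 k3 l3 m3 k4 l4 m4) x y z) + m4 / k4 * f4 ((xi4 U0 c0 rho0 wf f1 f2 f3 f4 k1 l1 m1 k2 l2 m2 k3 l3 m3 k4 l4 m4) x y z).
Definition Gs (U0 c0 rho0 wf : R) (f1 f2 f3 f4 : R -> R) (k1 l1 m1 k2 l2 m2 k3 l3 m3 k4 l4 m4 : R) (x y z : R) := l1 * f1 ((xi1 U0 c0 rho0 wf f1 f2 f3 f4 k1 l1 m1 k2 l2 m2 k3 l3 m3 k4 l4 m4) x y z) + l2 * f2 ((xi2 U0 c0 rho0 wf f1 f2 f3 f4 k1 l1 m1 k2 l2 m2 k3 l3 m3 k4 l4 m4) x y z) - f3 ((xi3 U0 c0 rho0 wf f1 f2 f3 f4 k1 l1 m1 k2 l2 m2 k3 l3 m3 k4 l4 m4) x y z).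
Definition Hs (U0 c0 rho0 wf : R) (f1 f2 f3 f4 : R -> R) (k1 l1 m1 k2 l2 m2 k3 l3 m3 k4 l4 m4 : R) (x y z : R) := m1 * f1 ((xi1 U0 c0 rho0 wf f1 f2 f3 f4 k1 l1 m1 k2 l2 m2 k3 l3 m3 k4 l4 m4) x y z) + m2 * f2 ((xi2 U0 c0 rho0 wf f1 f2 f3 f4 k1 l1 m1 k2 l2 m2 k3 l3 m3 k4 l4 m4) x y z) - f4 ((xi4 U0 c0 rho0 wf f1 f2 f3 f4 k1 l1 m1 k2 l2 m2 k3 l3 m3 k4 l4 m4) x y z).
Definition Ps (U0 c0 rho0 wf : R) (f1 f2 f3 f4 : R -> R) (k1 l1 m1 k2 l2 m2 k3 l3 m3 k4 l4 m4 : R) (x y z : R) := - c0 * rho0 * (r1 U0 c0 rho0 wf f1 f2 f3 f4 k1 l1 m1 k2 l2 m2 k3 l3 m3 k4 l4 m4) * f1 ((xi1 U0 c0 rho0 wf f1 f2 f3 f4 k1 l1 m1 k2 l2 m2 k3 l3 m3 k4 l4 m4) x y z) + c0 * rho0 * (r2 U0 c0 rho0 wf f1 f2 f3 f4 k1 l1 m1 k2 l2 m2 k3 l3 m3 k4 l4 m4) * f2 ((xi2 U0 c0 rho0 wf f1 f2 f3 f4 k1 l1 m1 k2 l2 m2 k3 l3 m3 k4 l4 m4) x y z).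

Definition dt (g : R -> R -> R -> R -> R) t x y z := Derive (fun s => g s x y z) t.
Definition dx (g : R -> R -> R -> R -> R) t x y z := Derive (fun s => g t s y z) x.
Definition dy (g : R -> R -> R -> R -> R) t x y z := Derive (fun s => g t x s z) y.
Definition dz (g : R -> R -> R -> R -> R) t x y z := Derive (fun s => g t x y s) z.

Definition partials_exist (g : R -> R -> R -> R -> R) t x y z : Prop :=
  ex_derive (fun s => g s x y z) t /\ ex_derive (fun s => g t s y z) x /\
  ex_derive (fun s => g t x s z) y /\ ex_derive (fun s => g t x y s) z.

(* Each field is a superposition of four plane-wave modes
     W(t, x) = h(t) * int_0^t f(xi - s (t - tau)) sin(wf tau) dtau,  xi = k x + l y + m z,
   with speeds s1 = k1 U0 - c0 r1, s2 = k2 U0 + c0 r2 (acoustic) and s3 = k3 U0,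
   s4 = k4 U0 (vortical).  Differentiating under the integral sign,
     d_t W = h(t) f(xi) sin(wf t) - s W[f'],    d_x W = k W[f'],
   so the convected derivative (d_t + U0 d_x) of a mode is its source term plus
   (k U0 - s) W[f'].  This remainder vanishes for the vortical modes and is cancelled
   by the pressure gradient for the acoustic ones; in the pressure equation it is
   cancelled by the divergence, using r_i^2 = k_i^2 + l_i^2 + m_i^2.  The switch-on
   factor h(t) does no harm at t = 0, where W and d_t W both vanish since sin 0 = 0. *)

From Stdlib Require Import Reals Lra FunctionalExtensionality.
From Coquelicot Require Import Coquelicot.
Open Scope R_scope.

Lemma cont_diff_continuous f : cont_diff f -> forall w, continuous f w.
Proof.
  intros Hf w.
  apply (ex_derive_continuous (K := R_AbsRing) (V := R_NormedModule)), Hf.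
Qed.

Lemma continuous_affine_2d a b d (z : R * R) :
  continuous (fun z : R * R => a * fst z + b * snd z + d) z.
Proof.
  destruct z as [u v].
  apply (continuous_plus (V := R_NormedModule) (fun z : R * R => a * fst z + b * snd z));
    [| apply continuous_const].
  apply (continuous_plus (V := R_NormedModule) (fun z : R * R => a * fst z));
    apply (continuous_mult (K := R_AbsRing) (fun _ : R * R => _));
    auto using continuous_const, continuous_fst, continuous_snd.
Qed.

Lemma continuity_2d_pt_affine_sin (g : R -> R) c a b d wf u v :
  (forall w, continuous g w) ->
  continuity_2d_pt (fun u v => c * g (a * u + b * v + d) * sin (wf * v)) u v.
Proof.
  intros Hg. apply continuity_2d_pt_filterlim.
  apply (continuous_mult (K := R_AbsRing) (fun z : R * R => c * g (a * fst z + b * snd z + d))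
                         (fun z : R * R => sin (wf * snd z))).
  - apply (continuous_mult (K := R_AbsRing) (fun _ : R * R => c)); [apply continuous_const |].
    apply (continuous_comp (fun z : R * R => a * fst z + b * snd z + d) g);
      [apply continuous_affine_2d | apply Hg].
  - apply (continuous_comp (fun z : R * R => wf * snd z) sin); [| apply continuous_sin].
    apply (continuous_ext (fun z : R * R => 0 * fst z + wf * snd z + 0));
      [intros; simpl; ring | apply continuous_affine_2d].
Qed.

Definition duhamel (f : R -> R) (s wf t xi : R) : R :=
  RInt (fun tau => f (xi - s * (t - tau)) * sin (wf * tau)) 0 t.

Lemma duhamel_0 f s wf xi : duhamel f s wf 0 xi = 0.
Proof. apply (RInt_point (V := R_CompleteNormedModule)). Qed.

Lemma continuous_duhamel_integrand (g : R -> R) s wf t xi tau :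
  (forall w, continuous g w) ->
  continuous (fun tau => g (xi - s * (t - tau)) * sin (wf * tau)) tau.
Proof.
  intros Hg.
  apply (continuous_mult (K := R_AbsRing) (fun tau => g (xi - s * (t - tau)))).
  - apply (continuous_comp (fun tau => xi - s * (t - tau)) g); [| apply Hg].
    apply (ex_derive_continuous (K := R_AbsRing) (V := R_NormedModule)); auto_derive; auto.
  - apply continuous_sin_comp.
    apply (ex_derive_continuous (K := R_AbsRing) (V := R_NormedModule)); auto_derive; auto.
Qed.

Lemma ex_RInt_duhamel_integrand (g : R -> R) s wf t xi a b :
  (forall w, continuous g w) ->
  ex_RInt (fun tau => g (xi - s * (t - tau)) * sin (wf * tau)) a b.
Proof.
  intros Hg. apply (ex_RInt_continuous (V := R_CompleteNormedModule)).
  intros tau _. apply continuous_duhamel_integrand, Hg.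
Qed.

Lemma is_derive_duhamel_xi f s wf t (xi : R) : cont_diff f ->
  is_derive (duhamel f s wf t) xi (duhamel (Derive f) s wf t xi).
Proof.
  intros Hf. unfold duhamel.
  assert (Hd : forall u tau,
    Derive (fun u => f (u - s * (t - tau)) * sin (wf * tau)) u
    = 1 * Derive f (1 * u + s * tau + - s * t) * sin (wf * tau)).
  { intros u tau. apply is_derive_unique. auto_derive; [apply Hf |].
    replace (1 * u + s * tau + - s * t) with (u + - (s * (t - tau))) by ring.
    reflexivity. }
  rewrite (RInt_ext _ (fun tau => Derive (fun u => f (u - s * (t - tau)) * sin (wf * tau)) xi)).
  2: { intros tau _. rewrite Hd, Rmult_1_l. do 2 f_equal. ring. }
  apply (is_derive_RInt_param (fun u tau => f (u - s * (t - tau)) * sin (wf * tau))).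
  - apply filter_forall. intros u tau _. auto_derive. apply Hf.
  - intros tau _. eapply continuity_2d_pt_ext; [intros; symmetry; apply Hd |].
    apply continuity_2d_pt_affine_sin. apply Hf.
  - apply filter_forall. intros u. apply ex_RInt_duhamel_integrand, cont_diff_continuous, Hf.
Qed.

Lemma is_derive_duhamel_t f s wf (t : R) xi : cont_diff f ->
  is_derive (fun t => duhamel f s wf t xi) t
    (f xi * sin (wf * t) - s * duhamel (Derive f) s wf t xi).
Proof.
  intros Hf. unfold duhamel.
  set (F := fun u tau => f (xi - s * (u - tau)) * sin (wf * tau)).
  assert (Hd : forall u tau,
    Derive (fun u => F u tau) u = - s * Derive f (- s * u + s * tau + xi) * sin (wf * tau)).
  { intros u tau. apply is_derive_unique. unfold F. auto_derive; [apply Hf |].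
    replace (- s * u + s * tau + xi) with (xi + - (s * (u + - tau))) by ring.
    rewrite Rmult_1_r. reflexivity. }
  assert (Hcont : forall u tau, continuity_2d_pt (fun u v => Derive (fun z => F z v) u) u tau).
  { intros u tau. eapply continuity_2d_pt_ext; [intros; symmetry; apply Hd |].
    apply continuity_2d_pt_affine_sin. apply Hf. }
  assert (Hint : forall u a b, ex_RInt (fun tau => F u tau) a b).
  { intros u a b. apply ex_RInt_duhamel_integrand, cont_diff_continuous, Hf. }
  replace (f xi * sin (wf * t)
           - s * RInt (fun tau => Derive f (xi - s * (t - tau)) * sin (wf * tau)) 0 t)
    with (RInt (fun tau => Derive (fun u => F u tau) t) 0 t + F t t * 1).
  - apply (is_derive_RInt_param_bound_comp_aux3 F 0 (fun u => u) t 1).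
    + apply filter_forall. intros u. apply Hint.
    + exists (mkposreal 1 Rlt_0_1). apply filter_forall. intros u. apply Hint.
    + apply (is_derive_id (K := R_AbsRing)).
    + exists (mkposreal 1 Rlt_0_1). apply filter_forall. intros u tau _.
      unfold F. auto_derive. apply Hf.
    + intros tau _. apply Hcont.
    + apply locally_2d_forall. apply Hcont.
    + apply continuity_pt_filterlim, continuous_duhamel_integrand, cont_diff_continuous, Hf.
  - rewrite (RInt_ext _ (fun tau => - s * (Derive f (xi - s * (t - tau)) * sin (wf * tau)))).
    + rewrite (RInt_scal (V := R_CompleteNormedModule)).
      * unfold F. rewrite Rminus_diag, Rmult_0_r, Rminus_0_r.
        change (scal (- s) ?I) with (- s * I). ring.
      * apply ex_RInt_duhamel_integrand, Hf.
    + intros tau _. rewrite Hd, Rmult_assoc. do 3 f_equal. ring.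
Qed.

Lemma heaviside_nonneg t : 0 <= t -> heaviside t = 1.
Proof. unfold heaviside; destruct (Rle_dec 0 t); lra. Qed.

Lemma heaviside_neg t : t < 0 -> heaviside t = 0.
Proof. unfold heaviside; destruct (Rle_dec 0 t); lra. Qed.

(* At the jump [t = 0] the product is differentiable only because [g] has a
   double zero there. *)
Lemma is_derive_heaviside_mul (g : R -> R) (t d : R) :
  is_derive g t d -> (t = 0 -> g 0 = 0 /\ d = 0) ->
  is_derive (fun s => heaviside s * g s) t (heaviside t * d).
Proof.
  intros Hg Hjump.
  destruct (Rtotal_order t 0) as [Hneg | [Hzero | Hpos]].
  - rewrite heaviside_neg, Rmult_0_l by exact Hneg.
    apply (is_derive_ext_loc (fun _ => 0)).
    + apply (filter_imp (fun s => s < 0)); [| exact (open_lt 0 t Hneg)].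
      intros s Hs. rewrite heaviside_neg by exact Hs. symmetry. apply Rmult_0_l.
    + apply (is_derive_const (K := R_AbsRing) (V := R_NormedModule)).
  - subst t. destruct (Hjump eq_refl) as [Hg0 Hd0]. subst d.
    rewrite Rmult_0_r. apply is_derive_Reals. apply is_derive_Reals in Hg.
    intros eps Heps. destruct (Hg eps Heps) as [delta Hdelta].
    exists delta. intros h Hh Hhdelta.
    rewrite Hg0, Rmult_0_r. rewrite Hg0 in Hdelta.
    destruct (Rle_dec 0 (0 + h)) as [Hnonneg | Hneg].
    + rewrite heaviside_nonneg, Rmult_1_l by exact Hnonneg.
      exact (Hdelta h Hh Hhdelta).
    + rewrite heaviside_neg by lra.
      replace ((0 * g (0 + h) - 0) / h - 0) with 0 by (field; exact Hh).
      rewrite Rabs_R0. exact Heps.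
  - rewrite heaviside_nonneg, Rmult_1_l by lra.
    apply (is_derive_ext_loc g); [| exact Hg].
    apply (filter_imp (fun s => 0 < s)); [| exact (open_gt 0 t Hpos)].
    intros s Hs. rewrite heaviside_nonneg by lra. symmetry. apply Rmult_1_l.
Qed.

Definition plane_wave (f : R -> R) (s k l m wf t x y z : R) : R :=
  heaviside t * duhamel f s wf t (k * x + l * y + m * z).

Lemma is_derive_plane_wave_t f s k l m wf (t : R) x y z : cont_diff f ->
  is_derive (fun t => plane_wave f s k l m wf t x y z) t
    (heaviside t * f (k * x + l * y + m * z) * sin (wf * t)
     - s * plane_wave (Derive f) s k l m wf t x y z).
Proof.
  intros Hf. unfold plane_wave.
  replace (heaviside t * f (k * x + l * y + m * z) * sin (wf * t) - _)
    with (heaviside t * (f (k * x + l * y + m * z) * sin (wf * t)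
                         - s * duhamel (Derive f) s wf t (k * x + l * y + m * z))) by ring.
  apply is_derive_heaviside_mul; [apply is_derive_duhamel_t, Hf |].
  intros ->. rewrite !duhamel_0, Rmult_0_r, sin_0. split; ring.
Qed.

Lemma is_derive_heaviside_duhamel_comp f s wf t (p : R -> R) (u a : R) : cont_diff f ->
  is_derive p u a ->
  is_derive (fun u => heaviside t * duhamel f s wf t (p u)) u
    (a * (heaviside t * duhamel (Derive f) s wf t (p u))).
Proof.
  intros Hf Hp. rewrite <- Rmult_assoc, (Rmult_comm a), Rmult_assoc.
  apply is_derive_scal, (is_derive_comp (duhamel f s wf t) p); [| exact Hp].
  apply is_derive_duhamel_xi, Hf.
Qed.

Lemma is_derive_plane_wave_x f s k l m wf t (x : R) y z : cont_diff f ->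
  is_derive (fun x => plane_wave f s k l m wf t x y z) x
    (k * plane_wave (Derive f) s k l m wf t x y z).
Proof.
  intros Hf.
  apply (is_derive_heaviside_duhamel_comp _ _ _ _ (fun x => k * x + l * y + m * z));
    [exact Hf | auto_derive; trivial; ring].
Qed.

Lemma is_derive_plane_wave_y f s k l m wf t x (y : R) z : cont_diff f ->
  is_derive (fun y => plane_wave f s k l m wf t x y z) y
    (l * plane_wave (Derive f) s k l m wf t x y z).
Proof.
  intros Hf.
  apply (is_derive_heaviside_duhamel_comp _ _ _ _ (fun y => k * x + l * y + m * z));
    [exact Hf | auto_derive; trivial; ring].
Qed.

Lemma is_derive_plane_wave_z f s k l m wf t x y (z : R) : cont_diff f ->
  is_derive (fun z => plane_wave f s k l m wf t x y z) z
    (m * plane_wave (Derive f) s k l m wf t x y z).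
Proof.
  intros Hf.
  apply (is_derive_heaviside_duhamel_comp _ _ _ _ (fun z => k * x + l * y + m * z));
    [exact Hf | auto_derive; trivial; ring].
Qed.

Lemma is_derive_lincomb4 (g1 g2 g3 g4 : R -> R) (x : R) c1 c2 c3 c4 d1 d2 d3 d4 :
  is_derive g1 x d1 -> is_derive g2 x d2 -> is_derive g3 x d3 -> is_derive g4 x d4 ->
  is_derive (fun u => c1 * g1 u + c2 * g2 u + c3 * g3 u + c4 * g4 u) x
    (c1 * d1 + c2 * d2 + c3 * d3 + c4 * d4).
Proof.
  intros H1 H2 H3 H4.
  apply (is_derive_plus (V := R_NormedModule)); [apply (is_derive_plus (V := R_NormedModule)) |];
    [apply (is_derive_plus (V := R_NormedModule)) | |]; apply is_derive_scal; assumption.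
Qed.

Lemma RInt_lincomb4 (g1 g2 g3 g4 : R -> R) a b c1 c2 c3 c4 :
  ex_RInt g1 a b -> ex_RInt g2 a b -> ex_RInt g3 a b -> ex_RInt g4 a b ->
  RInt (fun u => c1 * g1 u + c2 * g2 u + c3 * g3 u + c4 * g4 u) a b
  = c1 * RInt g1 a b + c2 * RInt g2 a b + c3 * RInt g3 a b + c4 * RInt g4 a b.
Proof.
  intros H1 H2 H3 H4. apply is_RInt_unique.
  apply (is_RInt_plus (V := R_NormedModule)); [apply (is_RInt_plus (V := R_NormedModule)) |];
    [apply (is_RInt_plus (V := R_NormedModule)) | |];
    apply (is_RInt_scal (V := R_NormedModule)), (RInt_correct (V := R_CompleteNormedModule));
    assumption.
Qed.

Section PlaneWaveSuperposition.

Variables (U0 c0 rho0 wf : R) (f1 f2 f3 f4 : R -> R)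
  (k1 l1 m1 k2 l2 m2 k3 l3 m3 k4 l4 m4 : R).
Hypotheses (Hf1 : cont_diff f1) (Hf2 : cont_diff f2) (Hf3 : cont_diff f3) (Hf4 : cont_diff f4).

Local Notation rad1 := (r1 U0 c0 rho0 wf f1 f2 f3 f4 k1 l1 m1 k2 l2 m2 k3 l3 m3 k4 l4 m4).
Local Notation rad2 := (r2 U0 c0 rho0 wf f1 f2 f3 f4 k1 l1 m1 k2 l2 m2 k3 l3 m3 k4 l4 m4).
Local Notation s1 := (k1 * U0 - c0 * rad1).
Local Notation s2 := (k2 * U0 + c0 * rad2).
Local Notation dw1 := (plane_wave (Derive f1) s1 k1 l1 m1 wf).
Local Notation dw2 := (plane_wave (Derive f2) s2 k2 l2 m2 wf).
Local Notation dw3 := (plane_wave (Derive f3) (k3 * U0) k3 l3 m3 wf).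
Local Notation dw4 := (plane_wave (Derive f4) (k4 * U0) k4 l4 m4 wf).

Definition superposition (c1 c2 c3 c4 t x y z : R) : R :=
  c1 * plane_wave f1 s1 k1 l1 m1 wf t x y z + c2 * plane_wave f2 s2 k2 l2 m2 wf t x y z
  + c3 * plane_wave f3 (k3 * U0) k3 l3 m3 wf t x y z
  + c4 * plane_wave f4 (k4 * U0) k4 l4 m4 wf t x y z.

Local Notation A1 := (a1 U0 c0 rho0 wf f1 f2 f3 f4 k1 l1 m1 k2 l2 m2 k3 l3 m3 k4 l4 m4).
Local Notation A2 := (a2 U0 c0 rho0 wf f1 f2 f3 f4 k1 l1 m1 k2 l2 m2 k3 l3 m3 k4 l4 m4).
Local Notation A3 := (a3 U0 c0 rho0 wf f1 f2 f3 f4 k1 l1 m1 k2 l2 m2 k3 l3 m3 k4 l4 m4).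
Local Notation A4 := (a4 U0 c0 rho0 wf f1 f2 f3 f4 k1 l1 m1 k2 l2 m2 k3 l3 m3 k4 l4 m4).

Lemma superposition_RInt c1 c2 c3 c4 t x y z :
  superposition c1 c2 c3 c4 t x y z
  = heaviside t * RInt (fun tau =>
      (c1 * A1 t x y z tau + c2 * A2 t x y z tau + c3 * A3 t x y z tau + c4 * A4 t x y z tau)
      * sin (wf * tau)) 0 t.
Proof.
  rewrite (RInt_ext _ (fun tau =>
      c1 * (A1 t x y z tau * sin (wf * tau)) + c2 * (A2 t x y z tau * sin (wf * tau))
      + c3 * (A3 t x y z tau * sin (wf * tau)) + c4 * (A4 t x y z tau * sin (wf * tau)))).
  - rewrite RInt_lincomb4;
      try (apply ex_RInt_duhamel_integrand, cont_diff_continuous; assumption).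
    unfold superposition, plane_wave, duhamel, a1, a2, a3, a4, xi1, xi2, xi3, xi4. ring.
  - intros tau _. simpl. ring.
Qed.

Local Notation VX := (vx U0 c0 rho0 wf f1 f2 f3 f4 k1 l1 m1 k2 l2 m2 k3 l3 m3 k4 l4 m4).
Local Notation VY := (vy U0 c0 rho0 wf f1 f2 f3 f4 k1 l1 m1 k2 l2 m2 k3 l3 m3 k4 l4 m4).
Local Notation VZ := (vz U0 c0 rho0 wf f1 f2 f3 f4 k1 l1 m1 k2 l2 m2 k3 l3 m3 k4 l4 m4).
Local Notation PP := (pp U0 c0 rho0 wf f1 f2 f3 f4 k1 l1 m1 k2 l2 m2 k3 l3 m3 k4 l4 m4).

Lemma vx_superposition : VX = superposition k1 k2 (l3 / k3) (m4 / k4).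
Proof.
  extensionality t; extensionality x; extensionality y; extensionality z.
  rewrite superposition_RInt. reflexivity.
Qed.

Lemma vy_superposition : VY = superposition l1 l2 (-1) 0.
Proof.
  extensionality t; extensionality x; extensionality y; extensionality z.
  rewrite superposition_RInt. unfold vy. f_equal.
  apply RInt_ext. intros tau _. simpl. ring.
Qed.

Lemma vz_superposition : VZ = superposition m1 m2 0 (-1).
Proof.
  extensionality t; extensionality x; extensionality y; extensionality z.
  rewrite superposition_RInt. unfold vz. f_equal.
  apply RInt_ext. intros tau _. simpl. ring.
Qed.

Lemma pp_superposition : PP = superposition (- c0 * rho0 * rad1) (c0 * rho0 * rad2) 0 0.
Proof.
  extensionality t; extensionality x; extensionality y; extensionality z.
  rewrite superposition_RInt. unfold pp. f_equal.
  apply RInt_ext. intros tau _. simpl. ring.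
Qed.

Section Derivatives.

Variables (c1 c2 c3 c4 t x y z : R).

Lemma is_derive_superposition_t :
  is_derive (fun t => superposition c1 c2 c3 c4 t x y z) t
    (c1 * (heaviside t * f1 (k1 * x + l1 * y + m1 * z) * sin (wf * t) - s1 * dw1 t x y z)
     + c2 * (heaviside t * f2 (k2 * x + l2 * y + m2 * z) * sin (wf * t) - s2 * dw2 t x y z)
     + c3 * (heaviside t * f3 (k3 * x + l3 * y + m3 * z) * sin (wf * t)
             - k3 * U0 * dw3 t x y z)
     + c4 * (heaviside t * f4 (k4 * x + l4 * y + m4 * z) * sin (wf * t)
             - k4 * U0 * dw4 t x y z)).
Proof. apply is_derive_lincomb4; apply is_derive_plane_wave_t; assumption. Qed.

Lemma is_derive_superposition_x :
  is_derive (fun x => superposition c1 c2 c3 c4 t x y z) x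
    (c1 * (k1 * dw1 t x y z) + c2 * (k2 * dw2 t x y z)
     + c3 * (k3 * dw3 t x y z) + c4 * (k4 * dw4 t x y z)).
Proof. apply is_derive_lincomb4; apply is_derive_plane_wave_x; assumption. Qed.

Lemma is_derive_superposition_y :
  is_derive (fun y => superposition c1 c2 c3 c4 t x y z) y
    (c1 * (l1 * dw1 t x y z) + c2 * (l2 * dw2 t x y z)
     + c3 * (l3 * dw3 t x y z) + c4 * (l4 * dw4 t x y z)).
Proof. apply is_derive_lincomb4; apply is_derive_plane_wave_y; assumption. Qed.

Lemma is_derive_superposition_z :
  is_derive (fun z => superposition c1 c2 c3 c4 t x y z) z
    (c1 * (m1 * dw1 t x y z) + c2 * (m2 * dw2 t x y z)
     + c3 * (m3 * dw3 t x y z) + c4 * (m4 * dw4 t x y z)).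
Proof. apply is_derive_lincomb4; apply is_derive_plane_wave_z; assumption. Qed.

Lemma partials_exist_superposition : partials_exist (superposition c1 c2 c3 c4) t x y z.
Proof.
  repeat split; eexists;
    [apply is_derive_superposition_t | apply is_derive_superposition_x
    | apply is_derive_superposition_y | apply is_derive_superposition_z].
Qed.

End Derivatives.

Hypotheses (Hk3 : k3 <> 0) (Hk4 : k4 <> 0) (Hrho0 : rho0 <> 0).

Local Ltac expand_partials :=
  unfold dt, dx, dy, dz;
  repeat first
    [ rewrite (is_derive_unique _ _ _ (is_derive_superposition_t _ _ _ _ _ _ _ _))
    | rewrite (is_derive_unique _ _ _ (is_derive_superposition_x _ _ _ _ _ _ _ _))
    | rewrite (is_derive_unique _ _ _ (is_derive_superposition_y _ _ _ _ _ _ _ _))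
    | rewrite (is_derive_unique _ _ _ (is_derive_superposition_z _ _ _ _ _ _ _ _)) ].

Lemma momentum_equation_x t x y z :
  dt VX t x y z + U0 * dx VX t x y z + / rho0 * dx PP t x y z
  = heaviside t * Fs U0 c0 rho0 wf f1 f2 f3 f4 k1 l1 m1 k2 l2 m2 k3 l3 m3 k4 l4 m4 x y z
    * sin (wf * t).
Proof.
  rewrite vx_superposition, pp_superposition. expand_partials.
  unfold Fs, xi1, xi2, xi3, xi4. field. auto.
Qed.

Lemma momentum_equation_y t x y z :
  dt VY t x y z + U0 * dx VY t x y z + / rho0 * dy PP t x y z
  = heaviside t * Gs U0 c0 rho0 wf f1 f2 f3 f4 k1 l1 m1 k2 l2 m2 k3 l3 m3 k4 l4 m4 x y z
    * sin (wf * t).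
Proof.
  rewrite vy_superposition, pp_superposition. expand_partials.
  unfold Gs, xi1, xi2, xi3. field. auto.
Qed.

Lemma momentum_equation_z t x y z :
  dt VZ t x y z + U0 * dx VZ t x y z + / rho0 * dz PP t x y z
  = heaviside t * Hs U0 c0 rho0 wf f1 f2 f3 f4 k1 l1 m1 k2 l2 m2 k3 l3 m3 k4 l4 m4 x y z
    * sin (wf * t).
Proof.
  rewrite vz_superposition, pp_superposition. expand_partials.
  unfold Hs, xi1, xi2, xi4. field. auto.
Qed.

Lemma divergence_superposition t x y z :
  dx VX t x y z + dy VY t x y z + dz VZ t x y z
  = rad1 ^ 2 * dw1 t x y z + rad2 ^ 2 * dw2 t x y z.
Proof.
  rewrite vx_superposition, vy_superposition, vz_superposition. expand_partials.
  assert (Hrad1 : rad1 ^ 2 = k1 ^ 2 + l1 ^ 2 + m1 ^ 2) by (apply pow2_sqrt; nra).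
  assert (Hrad2 : rad2 ^ 2 = k2 ^ 2 + l2 ^ 2 + m2 ^ 2) by (apply pow2_sqrt; nra).
  rewrite Hrad1, Hrad2. field. auto.
Qed.

Lemma pressure_equation t x y z :
  dt PP t x y z + U0 * dx PP t x y z
    + rho0 * c0 ^ 2 * (dx VX t x y z + dy VY t x y z + dz VZ t x y z)
  = heaviside t * Ps U0 c0 rho0 wf f1 f2 f3 f4 k1 l1 m1 k2 l2 m2 k3 l3 m3 k4 l4 m4 x y z
    * sin (wf * t).
Proof.
  rewrite divergence_superposition, pp_superposition. expand_partials.
  unfold Ps, xi1, xi2. ring.
Qed.

End PlaneWaveSuperposition.

Theorem proposition7
  (U0 c0 rho0 wf : R) (f1 f2 f3 f4 : R -> R)
  (k1 l1 m1 k2 l2 m2 k3 l3 m3 k4 l4 m4 : R) :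
  0 < U0 -> 0 < c0 -> 0 < rho0 ->
  cont_diff f1 -> cont_diff f2 -> cont_diff f3 -> cont_diff f4 ->
  k3 * k4 <> 0 ->
  let VX := vx U0 c0 rho0 wf f1 f2 f3 f4 k1 l1 m1 k2 l2 m2 k3 l3 m3 k4 l4 m4 in
  let VY := vy U0 c0 rho0 wf f1 f2 f3 f4 k1 l1 m1 k2 l2 m2 k3 l3 m3 k4 l4 m4 in
  let VZ := vz U0 c0 rho0 wf f1 f2 f3 f4 k1 l1 m1 k2 l2 m2 k3 l3 m3 k4 l4 m4 in
  let P' := pp U0 c0 rho0 wf f1 f2 f3 f4 k1 l1 m1 k2 l2 m2 k3 l3 m3 k4 l4 m4 in
  let F := Fs U0 c0 rho0 wf f1 f2 f3 f4 k1 l1 m1 k2 l2 m2 k3 l3 m3 k4 l4 m4 in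
  let G := Gs U0 c0 rho0 wf f1 f2 f3 f4 k1 l1 m1 k2 l2 m2 k3 l3 m3 k4 l4 m4 in
  let H := Hs U0 c0 rho0 wf f1 f2 f3 f4 k1 l1 m1 k2 l2 m2 k3 l3 m3 k4 l4 m4 in
  let P := Ps U0 c0 rho0 wf f1 f2 f3 f4 k1 l1 m1 k2 l2 m2 k3 l3 m3 k4 l4 m4 in
  forall t x y z : R,
    partials_exist VX t x y z /\ partials_exist VY t x y z /\
    partials_exist VZ t x y z /\ partials_exist P' t x y z /\
    dt VX t x y z + U0 * dx VX t x y z + / rho0 * dx P' t x y z
      = heaviside t * F x y z * sin (wf * t) /\
    dt VY t x y z + U0 * dx VY t x y z + / rho0 * dy P' t x y z
      = heaviside t * G x y z * sin (wf * t) /\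
    dt VZ t x y z + U0 * dx VZ t x y z + / rho0 * dz P' t x y z
      = heaviside t * H x y z * sin (wf * t) /\
    dt P' t x y z + U0 * dx P' t x y z
      + rho0 * c0 ^ 2 * (dx VX t x y z + dy VY t x y z + dz VZ t x y z)
      = heaviside t * P x y z * sin (wf * t).
Proof.
  intros _ _ Hrho0 Hf1 Hf2 Hf3 Hf4 Hk VX VY VZ P' F G H P t x y z.
  assert (Hk3 : k3 <> 0) by (intros E; apply Hk; rewrite E; ring).
  assert (Hk4 : k4 <> 0) by (intros E; apply Hk; rewrite E; ring).
  assert (Hrho0' : rho0 <> 0) by lra.
  split; [unfold VX; rewrite vx_superposition by assumption;
          apply partials_exist_superposition; assumption |].
  split; [unfold VY; rewrite vy_superposition by assumption;
          apply partials_exist_superposition; assumption |].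
  split; [unfold VZ; rewrite vz_superposition by assumption;
          apply partials_exist_superposition; assumption |].
  split; [unfold P'; rewrite pp_superposition by assumption;
          apply partials_exist_superposition; assumption |].
  split; [apply momentum_equation_x; assumption |].
  split; [apply momentum_equation_y; assumption |].
  split; [apply momentum_equation_z; assumption |].
  apply pressure_equation; assumption.
Qed.
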